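(* Let $\Sigma$ be a set and let $y,z\in F(\Sigma)$ be such that the word $y^{-1}zy$ is freely reduced and non-trivial, with $z$ cyclically reduced and not a proper power. Then: (1) if $y=1$ and there are $i\in\mathbb{Z}$ and $g,h\in F(\Sigma)$ such that $z^i=gzh$ with the word $g\cdot z\cdot h$ freely reduced, then $i\geq 1$ and $g,h\in\langle z\rangle$; (2) if $y\neq 1$ and there are $i,j\in\mathbb{Z}$ and $g,h\in F(\Sigma)$ such that $y^{-1}z^iy=gy^{-1}z^jyh$ with the word $g\cdot y^{-1}z^jy\cdot h$ freely reduced, then $g=h=1$ and $i=j$.
   Context: $F(\Sigma)$ is the free group on $\Sigma$. An element $w$ is a proper power if $w=u^n$ for some $u\in F(\Sigma)$ and $n\geq 2$. *)

(* Free group F(S) on an arbitrary type S, presented by words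
   over the letters S x bool (true = generator, false = its inverse),
   modulo free cancellation. *)
From Stdlib Require Import List ZArith Relations.
Import ListNotations.

Definition letter (S : Type) : Type := (S * bool)%type.
Definition word (S : Type) : Type := list (letter S).

Definition inv_letter {S : Type} (x : letter S) : letter S := (fst x, negb (snd x)).

Definition winv {S : Type} (w : word S) : word S := rev (map inv_letter w).

Inductive red_step {S : Type} : word S -> word S -> Prop :=
| red_step_intro : forall (u v : word S) (x : letter S),
    red_step (u ++ x :: inv_letter x :: v) (u ++ v).

Definition fg_eq {S : Type} : word S -> word S -> Prop :=
  clos_refl_sym_trans (word S) red_step.

Definition reduced {S : Type} (w : word S) : Prop :=
  forall (u v : word S) (x : letter S), w <> u ++ x :: inv_letter x :: v.

Definition cyc_reduced {S : Type} (w : word S) : Prop :=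
  reduced w /\ forall (x : letter S) (u : word S), w <> x :: u ++ [inv_letter x].

Definition wpow_nat {S : Type} (w : word S) (n : nat) : word S :=
  concat (repeat w n).

Definition wpow {S : Type} (w : word S) (i : Z) : word S :=
  if (0 <=? i)%Z then wpow_nat w (Z.to_nat i) else wpow_nat (winv w) (Z.to_nat (- i)).

Definition proper_power {S : Type} (w : word S) : Prop :=
  exists (u : word S) (n : nat), (2 <= n)%nat /\ fg_eq w (wpow_nat u n).

Definition in_cyclic {S : Type} (z g : word S) : Prop :=
  exists k : Z, fg_eq g (wpow z k).

From Stdlib Require Import List ZArith Relations Lia ClassicalEpsilon.
Import ListNotations.

(* Both sides of each equation are freely reduced words ([z] is cyclically
   reduced, and [y^-1 z^n y] is reduced for [n >= 1]), so equality in F(Σ) is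
   literal equality of words.  A copy of [z] or [z^-1] inside the word [z^n]
   is a cyclic rotation of [z].  A reduced word is never a rotation of its
   inverse, and a word that is not a proper power is equal to none of its
   nontrivial rotations (Lyndon-Schützenberger), so the copy is aligned with
   the period of [z^n].  In (2), a leftover [z^k] next to [y^-1] or [y] would
   create a cancelling pair at the junction, which the reducedness of
   [y^-1 z y] excludes. *)

Section Words.

Context {A : Type}.
Implicit Types (x : letter A) (u v w y z g h : word A).

Lemma inv_letter_involutive x : inv_letter (inv_letter x) = x.
Proof. destruct x as [s b]; unfold inv_letter; simpl; now rewrite Bool.negb_involutive. Qed.

Lemma inv_letter_neq x : inv_letter x <> x.
Proof. destruct x as [s []]; discriminate. Qed.

Lemma winv_cons x u : winv (x :: u) = winv u ++ [inv_letter x].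
Proof. reflexivity. Qed.

Lemma winv_app u v : winv (u ++ v) = winv v ++ winv u.
Proof. unfold winv; now rewrite map_app, rev_app_distr. Qed.

Lemma winv_involutive u : winv (winv u) = u.
Proof.
  unfold winv; rewrite map_rev, rev_involutive, map_map.
  rewrite <- (map_id u) at 2; apply map_ext, inv_letter_involutive.
Qed.

Lemma length_winv u : length (winv u) = length u.
Proof. unfold winv; now rewrite length_rev, length_map. Qed.

Lemma winv_neq_nil u : u <> [] -> winv u <> [].
Proof. intros Hu E; apply Hu, length_zero_iff_nil; rewrite <- length_winv, E; reflexivity. Qed.

Lemma app_eq_app_le {B} (a b c d : list B) :
  a ++ b = c ++ d -> length a <= length c -> exists e, c = a ++ e /\ b = e ++ d.
Proof.
  intros E Hl; apply app_eq_app in E as [e [[Ea Ed] | [Ec Eb]]].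
  - subst a; rewrite length_app in Hl.
    destruct e; [exists []; now rewrite !app_nil_r | simpl in Hl; lia].
  - now exists e.
Qed.

Lemma app_eq_app_length {B} (a b c d : list B) :
  a ++ b = c ++ d -> length a = length c -> a = c /\ b = d.
Proof.
  intros E Hl; destruct (app_eq_app_le _ _ _ _ E) as [[|x e] [-> ->]]; [lia | | ].
  - now rewrite app_nil_r.
  - rewrite length_app in Hl; simpl in Hl; lia.
Qed.

Lemma app_sandwich {B} (a b g h M X : list B) :
  a ++ M ++ b = g ++ a ++ X ++ b ++ h ->
  exists e f, g ++ a = a ++ e /\ M = e ++ X ++ f /\ f ++ b = b ++ h.
Proof.
  intros E; rewrite (app_assoc g a) in E.
  destruct (app_eq_app_le _ _ _ _ E) as [e [Ee EM]]; [rewrite length_app; lia |].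
  assert (Hl : length (e ++ X) <= length M).
  { apply (f_equal (@length B)) in EM; rewrite !length_app in *; lia. }
  rewrite app_assoc in EM; symmetry in EM.
  destruct (app_eq_app_le _ _ _ _ EM Hl) as [f [Ef Eb]].
  exists e, f; now rewrite <- app_assoc in Ef.
Qed.

Definition joinable u v : Prop :=
  forall u' v' x, u = u' ++ [x] -> v <> inv_letter x :: v'.

Lemma reduced_nil : reduced (@nil (letter A)).
Proof. intros [|] v x E; discriminate. Qed.

Lemma reduced_cons x w :
  reduced (x :: w) <-> reduced w /\ forall w', w <> inv_letter x :: w'.
Proof.
  split.
  - intros H; split.
    + intros u v x' E; apply (H (x :: u) v x'); now rewrite E.
    + intros w' E; apply (H [] w' x); now rewrite E.
  - intros [Hw Hx] [|y u] v x' E; injection E as <- E.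
    + exact (Hx v E).
    + exact (Hw u v x' E).
Qed.

Lemma reduced_app u v : reduced (u ++ v) <-> reduced u /\ reduced v /\ joinable u v.
Proof.
  split.
  - intros H; repeat split.
    + intros p q x E; apply (H p (q ++ v) x); subst u; now rewrite <- app_assoc.
    + intros p q x E; apply (H (u ++ p) q x); subst v; now rewrite <- app_assoc.
    + intros u' v' x -> ->; apply (H u' v' x); now rewrite <- app_assoc.
  - intros (Hu & Hv & J) p q x E.
    apply app_eq_app in E as [l [[Eu El] | [Ep Ev]]].
    + destruct l as [| c [| d l]]; simpl in El.
      * exact (Hv [] q x (eq_sym El)).
      * injection El as <- El; exact (J p q x Eu (eq_sym El)).
      * injection El as <- <- _; exact (Hu p l x Eu).
    + exact (Hv l q x Ev).
Qed.

Lemma joinable_app_r u v w : v <> [] -> joinable u v -> joinable u (v ++ w).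
Proof.
  intros Hv J u' v' x Eu E; destruct v as [| c v]; [easy |].
  injection E as Ec _; subst c; exact (J u' v x Eu eq_refl).
Qed.

Lemma reduced_app_overlap u v w :
  v <> [] -> reduced (u ++ v) -> reduced (v ++ w) -> reduced (u ++ v ++ w).
Proof.
  intros Hv (Hu & _ & J)%reduced_app Hvw; apply reduced_app.
  repeat split; auto using joinable_app_r.
Qed.

Lemma reduced_winv w : reduced w -> reduced (winv w).
Proof.
  intros H p q x E; apply (H (winv q) (winv p) x).
  rewrite <- (winv_involutive w), E, winv_app, !winv_cons, inv_letter_involutive.
  now rewrite <- !app_assoc.
Qed.

Lemma winv_app_not_reduced y : y <> [] -> ~ reduced (winv y ++ y).
Proof.
  intros Hy H; destruct y as [| x y]; [easy |].
  apply (H (winv y) y (inv_letter x)).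
  now rewrite winv_cons, inv_letter_involutive, <- app_assoc.
Qed.

Lemma common_prefix_not_reduced y z u v :
  y <> [] -> z <> [] -> y ++ u = z ++ v -> ~ reduced (winv y ++ z).
Proof.
  intros Hy Hz E H; destruct y as [| x y], z as [| x' z]; try easy.
  injection E as <- _; apply (H (winv y) z (inv_letter x)).
  now rewrite winv_cons, inv_letter_involutive, <- app_assoc.
Qed.

Lemma common_suffix_not_reduced y z u v :
  y <> [] -> z <> [] -> u ++ winv y = v ++ z -> ~ reduced (z ++ y).
Proof.
  intros Hy Hz E H; apply (f_equal winv) in E; rewrite !winv_app, winv_involutive in E.
  apply (common_prefix_not_reduced y (winv z) _ _ Hy (winv_neq_nil z Hz) E).
  rewrite <- winv_app; now apply reduced_winv.
Qed.

Lemma cyc_reduced_app_self z : cyc_reduced z -> reduced (z ++ z).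
Proof.
  intros [Hz Hcyc]; apply reduced_app; repeat split; auto.
  intros [| c u'] v' x Eu Ez; rewrite Ez in Eu; simpl in Eu.
  - injection Eu as E _; exact (inv_letter_neq x E).
  - injection Eu as <- Eu; apply (Hcyc (inv_letter x) u').
    now rewrite Ez, Eu, inv_letter_involutive.
Qed.

Lemma fg_eq_winv_app y : fg_eq (winv y ++ y) [].
Proof.
  induction y as [| x y IH]; [apply rst_refl |].
  apply rst_trans with (winv y ++ y); [| exact IH].
  apply rst_step; rewrite winv_cons, <- app_assoc; simpl.
  rewrite <- (inv_letter_involutive x) at 2; constructor.
Qed.

(* Free reduction by a stack.  Letters over an arbitrary [A] have no decidable
   equality, so the comparison in [push] is classical. *)
Definition push x w : word A :=
  match w with
  | [] => [x]
  | y :: w' => if excluded_middle_informative (y = inv_letter x) then w' else x :: w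
  end.

Definition nf (w : word A) : word A := fold_right push [] w.

Lemma reduced_push x w : reduced w -> reduced (push x w).
Proof.
  destruct w as [| y w]; simpl; intros H.
  - apply reduced_cons; split; [apply reduced_nil | discriminate].
  - destruct (excluded_middle_informative _) as [_ | Hy].
    + now apply reduced_cons in H.
    + apply reduced_cons; split; [exact H |].
      intros w' E; injection E as E _; exact (Hy E).
Qed.

Lemma reduced_nf w : reduced (nf w).
Proof. induction w; [apply reduced_nil | now apply reduced_push]. Qed.

Lemma nf_reduced w : reduced w -> nf w = w.
Proof.
  induction w as [| x w IH]; intros H; [reflexivity |].
  apply reduced_cons in H as [Hw Hx]; simpl; fold (nf w); rewrite IH by exact Hw.
  destruct w as [| y w]; [reflexivity |]; simpl.
  destruct (excluded_middle_informative _) as [-> | _]; [now destruct (Hx w) | reflexivity].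
Qed.

Lemma push_inv_letter x w : reduced w -> push x (push (inv_letter x) w) = w.
Proof.
  intros H; destruct w as [| y w]; simpl.
  - destruct (excluded_middle_informative _); [reflexivity | easy].
  - destruct (excluded_middle_informative (y = inv_letter (inv_letter x))) as [Ey | Ey].
    + rewrite inv_letter_involutive in Ey; subst y.
      apply reduced_cons in H as [_ Hx].
      destruct w as [| y w]; simpl; [reflexivity |].
      destruct (excluded_middle_informative _) as [-> | _]; [now destruct (Hx w) | reflexivity].
    + simpl; destruct (excluded_middle_informative _); [reflexivity | easy].
Qed.

Lemma nf_red_step u v : red_step u v -> nf u = nf v.
Proof.
  intros [p q x]; unfold nf; rewrite !fold_right_app; simpl.
  now rewrite push_inv_letter by apply reduced_nf.
Qed.

Lemma nf_fg_eq u v : fg_eq u v -> nf u = nf v.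
Proof. induction 1; [now apply nf_red_step | reflexivity | easy | congruence]. Qed.

Lemma fg_eq_reduced u v : reduced u -> reduced v -> fg_eq u v -> u = v.
Proof. intros Hu Hv E; rewrite <- (nf_reduced u Hu), <- (nf_reduced v Hv); now apply nf_fg_eq. Qed.

Lemma wpow_nat_succ w n : wpow_nat w (S n) = w ++ wpow_nat w n.
Proof. reflexivity. Qed.

Lemma wpow_nat_add w m n : wpow_nat w (m + n) = wpow_nat w m ++ wpow_nat w n.
Proof. unfold wpow_nat; now rewrite repeat_app, concat_app. Qed.

Lemma wpow_nat_1 w : wpow_nat w 1 = w.
Proof. apply app_nil_r. Qed.

Lemma wpow_nat_succ_r w n : wpow_nat w (S n) = wpow_nat w n ++ w.
Proof. now rewrite <- Nat.add_1_r, wpow_nat_add, wpow_nat_1. Qed.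

Lemma length_wpow_nat w n : length (wpow_nat w n) = n * length w.
Proof. induction n as [| n IH]; [reflexivity |]; rewrite wpow_nat_succ, length_app, IH; lia. Qed.

Lemma wpow_of_nat z n : wpow z (Z.of_nat n) = wpow_nat z n.
Proof. unfold wpow; destruct (Z.leb_spec 0 (Z.of_nat n)); [now rewrite Nat2Z.id | lia]. Qed.

Lemma wpow_pos z p : wpow z (Z.pos p) = wpow_nat z (Pos.to_nat p).
Proof. reflexivity. Qed.

Lemma wpow_neg z p : wpow z (Z.neg p) = wpow_nat (winv z) (Pos.to_nat p).
Proof. reflexivity. Qed.

Lemma wpow_winv z i : wpow (winv z) i = wpow z (- i).
Proof. destruct i; unfold wpow; simpl; now rewrite ?winv_involutive. Qed.

Lemma reduced_wpow_nat z n : z <> [] -> reduced (z ++ z) -> reduced (wpow_nat z n).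
Proof.
  intros Hz Hzz; induction n as [| [| n] IH]; [apply reduced_nil | |].
  - rewrite wpow_nat_succ_r; apply reduced_app in Hzz; tauto.
  - rewrite wpow_nat_succ; now apply reduced_app_overlap.
Qed.

Lemma reduced_conj_wpow_nat y z n :
  z <> [] -> reduced (z ++ z) -> reduced (winv y ++ z ++ y) -> 1 <= n ->
  reduced (winv y ++ wpow_nat z n ++ y).
Proof.
  intros Hz Hzz Hyzy Hn; destruct n as [| n]; [lia |].
  assert (Hzy : reduced (z ++ y)) by (apply reduced_app in Hyzy; tauto).
  rewrite app_assoc in Hyzy; apply reduced_app in Hyzy as (Hyz & _).
  assert (Hzn : reduced (winv y ++ z ++ wpow_nat z n)).
  { apply reduced_app_overlap; [exact Hz | exact Hyz |].
    rewrite <- wpow_nat_succ; now apply reduced_wpow_nat. }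
  rewrite <- wpow_nat_succ, wpow_nat_succ_r, app_assoc in Hzn.
  rewrite wpow_nat_succ_r, <- app_assoc, app_assoc.
  now apply reduced_app_overlap.
Qed.

Definition primitive w : Prop := forall u v, w = u ++ v -> w = v ++ u -> u = [] \/ v = [].

Lemma commute_shorter {B} (u v : list B) :
  u ++ v = v ++ u -> length u <= length v -> exists e, v = u ++ e /\ u ++ e = e ++ u.
Proof.
  intros E Hl; destruct (app_eq_app_le _ _ _ _ E Hl) as [e [Ev Eu]].
  exists e; split; [exact Ev |].
  rewrite Ev, <- app_assoc in E; now apply app_inv_head in E.
Qed.

Lemma commute_wpow_nat u v :
  u ++ v = v ++ u -> exists t a b, u = wpow_nat t a /\ v = wpow_nat t b.
Proof.
  remember (length u + length v) as N eqn:HN; revert u v HN.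
  induction N as [N IH] using lt_wf_ind; intros u v HN E.
  destruct u as [| c u]; [exists v, 0, 1; now rewrite wpow_nat_1 |].
  destruct v as [| d v]; [exists (c :: u), 1, 0; now rewrite wpow_nat_1 |].
  destruct (Nat.le_ge_cases (length (c :: u)) (length (d :: v))) as [Hl | Hl].
  - destruct (commute_shorter _ _ E Hl) as [e [Ev Ee]].
    assert (Hlen : length (d :: v) = length (c :: u) + length e)
      by (now rewrite Ev, length_app).
    destruct (IH (length (c :: u) + length e) ltac:(simpl in *; lia) _ _ eq_refl Ee)
      as (t & a & b & Ha & Hb).
    exists t, a, (a + b); now rewrite Ev, wpow_nat_add, <- Ha, <- Hb.
  - destruct (commute_shorter _ _ (eq_sym E) Hl) as [e [Eu Ee]].
    assert (Hlen : length (c :: u) = length (d :: v) + length e)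
      by (now rewrite Eu, length_app).
    destruct (IH (length (d :: v) + length e) ltac:(simpl in *; lia) _ _ eq_refl Ee)
      as (t & b & a & Hb & Ha).
    exists t, (b + a), b; now rewrite Eu, wpow_nat_add, <- Ha, <- Hb.
Qed.

Lemma not_proper_power_nonempty z : ~ proper_power z -> z <> [].
Proof. intros Hz ->; apply Hz; exists [], 2; split; [lia | apply rst_refl]. Qed.

Lemma not_proper_power_primitive z : ~ proper_power z -> primitive z.
Proof.
  intros Hz u v E1 E2.
  destruct u as [| c u]; [now left |]; destruct v as [| d v]; [now right |].
  exfalso; destruct (commute_wpow_nat (c :: u) (d :: v)) as (t & a & b & Ha & Hb);
    [congruence |].
  destruct a; [discriminate |]; destruct b; [discriminate |].
  apply Hz; exists t, (S a + S b); split; [lia |].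
  rewrite E1, Ha, Hb, <- wpow_nat_add; apply rst_refl.
Qed.

Lemma primitive_winv z : primitive z -> primitive (winv z).
Proof.
  intros Hz u v E1 E2.
  apply (f_equal winv) in E1, E2; rewrite winv_involutive, winv_app in E1, E2.
  destruct (Hz _ _ E1 E2) as [Ev | Eu].
  - right; now rewrite <- (winv_involutive v), Ev.
  - left; now rewrite <- (winv_involutive u), Eu.
Qed.

Lemma infix_wpow_nat_rotation z n g w h :
  g ++ w ++ h = wpow_nat z n -> length w = length z ->
  exists k u v, z = u ++ v /\ w = v ++ u /\ g = wpow_nat z k ++ u.
Proof.
  revert g; induction n as [| n IH]; intros g E Hl.
  - apply app_eq_nil in E as [-> [-> _]%app_eq_nil].
    destruct z; [exists 0, [], []; auto | discriminate].
  - rewrite wpow_nat_succ in E.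
    destruct (Nat.le_gt_cases (length z) (length g)) as [Hzg | Hgz].
    + destruct (app_eq_app_le _ _ _ _ (eq_sym E) Hzg) as [g' [-> E']].
      destruct (IH g' (eq_sym E') Hl) as (k & u & v & Ez & Ew & Eg).
      exists (S k), u, v; now rewrite Eg, wpow_nat_succ, app_assoc.
    + destruct (app_eq_app_le _ _ _ _ E ltac:(lia)) as [e [Ez E']].
      assert (Hzl : length z = length g + length e) by (now rewrite Ez, length_app).
      destruct (app_eq_app_le _ _ _ _ (eq_sym E') ltac:(lia)) as [f [Ew Ef]].
      assert (Hwl : length w = length e + length f) by (now rewrite Ew, length_app).
      assert (f = g) as ->.
      { destruct n as [| n].
        - symmetry in Ef; apply app_eq_nil in Ef as [-> _].
          symmetry; apply length_zero_iff_nil; simpl in Hwl; lia.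
        - rewrite wpow_nat_succ, Ez, <- app_assoc in Ef.
          symmetry; apply (app_eq_app_length _ _ _ _ Ef); lia. }
      exists 0, g, e; auto.
Qed.

Lemma wpow_nat_app_inv z m n f :
  z <> [] -> wpow_nat z m ++ f = wpow_nat z n -> f = wpow_nat z (n - m).
Proof.
  intros Hz E.
  assert (Hmn : m <= n).
  { apply (f_equal (@length _)) in E; rewrite length_app, !length_wpow_nat in E.
    destruct z; [easy |]; simpl in E; nia. }
  replace n with (m + (n - m)) in E by lia.
  rewrite wpow_nat_add in E; now apply app_inv_head in E.
Qed.

Lemma primitive_infix_wpow_nat z n g h :
  primitive z -> z <> [] -> g ++ z ++ h = wpow_nat z n ->
  exists k l, g = wpow_nat z k /\ h = wpow_nat z l.
Proof.
  intros Hp Hz E.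
  destruct (infix_wpow_nat_rotation z n g z h E eq_refl) as (k & u & v & E1 & E2 & Eg).
  assert (exists k', g = wpow_nat z k') as [k' ->].
  { destruct (Hp u v E1 E2) as [-> | ->].
    - exists k; now rewrite app_nil_r in Eg.
    - exists (S k); rewrite app_nil_r in E1; now rewrite wpow_nat_succ_r, Eg, <- E1. }
  rewrite app_assoc, <- wpow_nat_succ_r in E.
  exists k', (n - S k'); split; [reflexivity |]; exact (wpow_nat_app_inv _ _ _ _ Hz E).
Qed.

Lemma reduced_winv_eq_self w : reduced w -> winv w = w -> w = [].
Proof.
  remember (length w) as N eqn:HN; revert w HN.
  induction N as [N IH] using lt_wf_ind; intros w HN Hw E.
  destruct w as [| a w]; [reflexivity | exfalso].
  destruct w as [| b w]; [injection E as E; exact (inv_letter_neq a E) |].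
  destruct (exists_last (l := b :: w) ltac:(discriminate)) as [m [c Ebw]]; rewrite Ebw in *.
  rewrite winv_cons, winv_app in E; simpl in E; injection E as Ec E.
  apply app_inj_tail in E as [Em Ea].
  assert (Hm : reduced m) by (apply reduced_cons, proj1, reduced_app in Hw; tauto).
  assert (m = []) as ->.
  { apply (IH (length m)); auto; subst N; simpl; rewrite length_app; simpl; lia. }
  apply (Hw [] [] a); simpl; now rewrite <- Ea.
Qed.

Lemma winv_not_rotation z u v : reduced z -> z <> [] -> z = u ++ v -> winv z <> v ++ u.
Proof.
  intros Hzr Hz -> E; rewrite winv_app in E.
  apply app_eq_app_length in E as [Ev Eu]; [| apply length_winv].
  apply reduced_app in Hzr as (Hu & Hv & _).
  apply reduced_winv_eq_self in Ev, Eu; auto; now subst.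
Qed.

Lemma winv_not_infix_wpow_nat z n g h :
  reduced z -> z <> [] -> g ++ winv z ++ h <> wpow_nat z n.
Proof.
  intros Hzr Hz E.
  destruct (infix_wpow_nat_rotation z n g (winv z) h E (length_winv z))
    as (k & u & v & E1 & E2 & _).
  exact (winv_not_rotation z u v Hzr Hz E1 E2).
Qed.

(* The occurrence of [z^m] must start at a multiple of [|z|] since [z] is
   primitive; a nonzero offset [z^k] on either side would meet [y] in a
   cancelling pair. *)
Lemma conj_wpow_nat_eq y z n m g h :
  y <> [] -> z <> [] -> primitive z -> reduced (winv y ++ z ++ y) -> 1 <= m ->
  winv y ++ wpow_nat z n ++ y = g ++ winv y ++ wpow_nat z m ++ y ++ h ->
  g = [] /\ h = [] /\ n = m.
Proof.
  intros Hy Hz Hprim Hyzy Hm E; destruct (app_sandwich _ _ _ _ _ _ E) as (e & f & Eg & En & Eh).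
  destruct m as [| m]; [lia |].
  rewrite wpow_nat_succ, <- app_assoc in En.
  destruct (primitive_infix_wpow_nat z n e _ Hprim Hz (eq_sym En)) as ([| k] & l & -> & _).
  2: { exfalso; rewrite wpow_nat_succ_r, app_assoc in Eg.
       apply (common_suffix_not_reduced y z _ _ Hy Hz Eg).
       apply reduced_app in Hyzy; tauto. }
  change (wpow_nat z 0) with (@nil (letter A)) in Eg; rewrite app_nil_r in Eg.
  apply (app_inv_tail (winv y) g []) in Eg as ->.
  simpl in En; rewrite app_assoc, <- wpow_nat_succ in En; symmetry in En.
  pose proof (wpow_nat_app_inv _ _ _ _ Hz En) as Ef.
  destruct (n - S m) as [| d] eqn:Hd.
  - subst f; rewrite app_nil_r in En; simpl in Eh.
    rewrite <- (app_nil_r y) in Eh at 1; apply app_inv_head in Eh as <-.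
    split; [reflexivity | split; [reflexivity |]].
    apply (f_equal (@length _)) in En; rewrite !length_wpow_nat in En.
    destruct z; [easy |]; simpl in En; nia.
  - exfalso; rewrite Ef, wpow_nat_succ, <- app_assoc in Eh.
    apply (common_prefix_not_reduced y z _ _ Hy Hz (eq_sym Eh)).
    rewrite app_assoc in Hyzy; apply reduced_app in Hyzy; tauto.
Qed.

Lemma conj_wpow_nat_winv_neq y z n m g h :
  reduced z -> z <> [] -> 1 <= m ->
  winv y ++ wpow_nat z n ++ y <> g ++ winv y ++ wpow_nat (winv z) m ++ y ++ h.
Proof.
  intros Hzr Hz Hm E; destruct (app_sandwich _ _ _ _ _ _ E) as (e & f & _ & En & _).
  destruct m as [| m]; [lia |].
  rewrite wpow_nat_succ, <- app_assoc in En.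
  exact (winv_not_infix_wpow_nat z n e _ Hzr Hz (eq_sym En)).
Qed.

Lemma reduced_conj_winv y z : reduced (winv y ++ z ++ y) -> reduced (winv y ++ winv z ++ y).
Proof.
  intros H; apply reduced_winv in H.
  now rewrite !winv_app, winv_involutive, <- app_assoc in H.
Qed.

Lemma reduced_winv_app_self z : reduced (z ++ z) -> reduced (winv z ++ winv z).
Proof. intros H; rewrite <- winv_app; now apply reduced_winv. Qed.

Lemma wpow_eq_infix_in_cyclic z i g h :
  z <> [] -> reduced (z ++ z) -> primitive z -> reduced (g ++ z ++ h) ->
  fg_eq (wpow z i) (g ++ z ++ h) -> (1 <= i)%Z /\ in_cyclic z g /\ in_cyclic z h.
Proof.
  intros Hz Hzz Hp Hr E.
  assert (Hzr : reduced z) by (apply reduced_app in Hzz; tauto).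
  destruct i as [| p | p].
  - exfalso; apply fg_eq_reduced in E; [| apply reduced_nil | exact Hr].
    symmetry in E; apply app_eq_nil in E as [_ [E _]%app_eq_nil]; exact (Hz E).
  - rewrite wpow_pos in E.
    apply fg_eq_reduced in E; [| now apply reduced_wpow_nat | exact Hr].
    destruct (primitive_infix_wpow_nat z _ g h Hp Hz (eq_sym E)) as (k & l & -> & ->).
    split; [lia |].
    split; [exists (Z.of_nat k) | exists (Z.of_nat l)]; rewrite wpow_of_nat; apply rst_refl.
  - rewrite wpow_neg in E; exfalso.
    apply fg_eq_reduced in E;
      [| apply reduced_wpow_nat; auto using winv_neq_nil, reduced_winv_app_self | exact Hr].
    apply (winv_not_infix_wpow_nat (winv z) (Pos.to_nat p) g h);
      [now apply reduced_winv | now apply winv_neq_nil |].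
    now rewrite winv_involutive.
Qed.

Lemma conj_wpow_pos_eq y z g h p j :
  y <> [] -> z <> [] -> reduced (z ++ z) -> primitive z -> reduced (winv y ++ z ++ y) ->
  reduced (g ++ winv y ++ wpow z j ++ y ++ h) ->
  fg_eq (winv y ++ wpow z (Z.pos p) ++ y) (g ++ winv y ++ wpow z j ++ y ++ h) ->
  g = [] /\ h = [] /\ Z.pos p = j.
Proof.
  intros Hy Hz Hzz Hp Hyzy Hr E.
  assert (Hzr : reduced z) by (apply reduced_app in Hzz; tauto).
  rewrite wpow_pos in E.
  apply fg_eq_reduced in E; [| apply reduced_conj_wpow_nat; auto; lia | exact Hr].
  destruct j as [| q | q].
  - exfalso; apply reduced_app in Hr as (_ & Hr & _).
    change (wpow z 0) with (@nil (letter A)) in Hr; rewrite app_nil_l, app_assoc in Hr.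
    apply reduced_app in Hr as (Hr & _); exact (winv_app_not_reduced y Hy Hr).
  - rewrite wpow_pos in E.
    destruct (conj_wpow_nat_eq y z _ (Pos.to_nat q) g h Hy Hz Hp Hyzy ltac:(lia) E)
      as (-> & -> & Hpq).
    split; [reflexivity | split; [reflexivity | now rewrite (Pos2Nat.inj _ _ Hpq)]].
  - rewrite wpow_neg in E; exfalso.
    exact (conj_wpow_nat_winv_neq y z _ (Pos.to_nat q) g h Hzr Hz ltac:(lia) E).
Qed.

Lemma conj_wpow_eq y z g h i j :
  y <> [] -> z <> [] -> reduced (z ++ z) -> primitive z -> reduced (winv y ++ z ++ y) ->
  reduced (g ++ winv y ++ wpow z j ++ y ++ h) ->
  fg_eq (winv y ++ wpow z i ++ y) (g ++ winv y ++ wpow z j ++ y ++ h) ->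
  g = [] /\ h = [] /\ i = j.
Proof.
  intros Hy Hz Hzz Hp Hyzy Hr E.
  destruct i as [| p | p].
  - exfalso; change (wpow z 0) with (@nil (letter A)) in E.
    assert (E0 : fg_eq [] (g ++ winv y ++ wpow z j ++ y ++ h))
      by (apply rst_trans with (winv y ++ y); [apply rst_sym, fg_eq_winv_app | exact E]).
    apply fg_eq_reduced in E0; [| apply reduced_nil | exact Hr].
    destruct y as [| x y]; [easy |].
    apply (f_equal (@length _)) in E0; rewrite !length_app in E0; simpl in E0; lia.
  - now apply (conj_wpow_pos_eq y z).
  - assert (Hsym : forall k, wpow z k = wpow (winv z) (- k))
      by (intros; now rewrite wpow_winv, Z.opp_involutive).
    rewrite (Hsym j) in Hr, E; rewrite (Hsym (Z.neg p)) in E.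
    destruct (conj_wpow_pos_eq y (winv z) g h p (- j)) as (-> & -> & Ej);
      auto using winv_neq_nil, reduced_winv_app_self, primitive_winv, reduced_conj_winv.
    split; [reflexivity | split; [reflexivity | lia]].
Qed.

End Words.

Theorem lemma2p1 (S : Type) (y z : word S) :
  reduced y -> reduced z ->
  reduced (winv y ++ z ++ y) -> winv y ++ z ++ y <> [] ->
  cyc_reduced z -> ~ proper_power z ->
  (y = [] ->
     forall (i : Z) (g h : word S),
       reduced g -> reduced h -> reduced (g ++ z ++ h) ->
       fg_eq (wpow z i) (g ++ z ++ h) ->
       (1 <= i)%Z /\ in_cyclic z g /\ in_cyclic z h)
  /\
  (y <> [] ->
     forall (i j : Z) (g h : word S),
       reduced g -> reduced h ->
       reduced (g ++ winv y ++ wpow z j ++ y ++ h) ->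
       fg_eq (winv y ++ wpow z i ++ y) (g ++ winv y ++ wpow z j ++ y ++ h) ->
       g = [] /\ h = [] /\ i = j).
Proof.
  intros _ _ Hyzy _ Hcyc Hnp.
  pose proof (not_proper_power_nonempty z Hnp) as Hz.
  pose proof (not_proper_power_primitive z Hnp) as Hp.
  pose proof (cyc_reduced_app_self z Hcyc) as Hzz.
  split.
  - intros -> i g h _ _ Hr E; now apply wpow_eq_infix_in_cyclic.
  - intros Hy i j g h _ _ Hr E; now apply (conj_wpow_eq y z).
Qed.
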